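(* Let $m,d\in\mathbb N$. Let $H$ be a bipartite graph with vertex classes $X$ and $Y$ such that any two sets $X'\subseteq X$, $Y'\subseteq Y$ with $|X'|=|Y'|=m$ have an edge between them. Suppose $X_0\subseteq X$ and $Y_0\subseteq Y$ satisfy $|X_0|,|Y_0|\ge (3d+4)m$. Then there is a set $B\subseteq V(H)$ with $|B|\le 2m$ such that every $U\subseteq V(H)\setminus B$ with $|U|\le m$ satisfies $|N(U,(X_0\cup Y_0)\setminus B)|\ge d|U|$.
   Context: For $U\subseteq V(H)$, $N(U)=\big(\bigcup_{u\in U}N(u)\big)\setminus U$ is the exterior neighbourhood, and $N(U,W)=N(U)\cap W$. *)

From mathcomp Require Import all_boot.
Set Implicit Arguments. Unset Strict Implicit. Unset Printing Implicit Defensive.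

Definition simple_graph (V : finType) (e : rel V) : Prop :=
  irreflexive e /\ symmetric e.

Definition bipartite_with (V : finType) (e : rel V) (X Y : {set V}) : Prop :=
  [/\ [disjoint X & Y], X :|: Y = setT &
      forall u v, e u v -> (u \in X) && (v \in Y) || (u \in Y) && (v \in X)].

Definition nbhd (V : finType) (e : rel V) (u : V) : {set V} := [set v | e u v].

Definition ext_nbhd (V : finType) (e : rel V) (U : {set V}) : {set V} :=
  (\bigcup_(u in U) nbhd e u) :\: U.

Definition ext_nbhd_in (V : finType) (e : rel V) (U W : {set V}) : {set V} :=
  ext_nbhd e U :&: W.

From mathcomp Require Import all_boot.
From mathcomp Require Import zify.

Set Implicit Arguments.
Unset Strict Implicit.
Unset Printing Implicit Defensive.

(* Take B maximal among the sets with |B| <= 2m and |N(B, W \ B)| <= d|B|,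
   where W = X0 ∪ Y0.  If some U outside B had |N(U, W \ B)| < d|U|, then
   S = B ∪ U would again satisfy |N(S, W \ S)| <= d|S|; by maximality
   2m < |S| <= 3m, so |N(S, W \ S)| <= 3dm.  But S has m vertices on one
   side, and as |S ∪ N(S)| <= (3d+3)m, at least m vertices of X0 or Y0 on
   the other side lie outside S ∪ N(S); the edge between these two m-sets
   gives a vertex of N(S) outside N(S). *)

Definition linked (V : finType) (e : rel V) (m : nat) (X Y : {set V}) :=
  forall X' Y' : {set V}, X' \subset X -> Y' \subset Y ->
    #|X'| = m -> #|Y'| = m -> exists x, exists y, [/\ x \in X', y \in Y' & e x y].

Lemma exists_subset_card (T : finType) (A : {set T}) k :
  k <= #|A| -> exists2 B : {set T}, B \subset A & #|B| = k.
Proof.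
elim: k => [|k IHk] ltkA; first by exists set0; rewrite ?sub0set ?cards0.
have [B sBA cardB] := IHk (ltnW ltkA).
have /card_gt0P [x] : 0 < #|A :\: B| by rewrite cardsDS // cardB subn_gt0.
rewrite inE => /andP [xNB xA].
by exists (x |: B); rewrite ?subUset ?sub1set ?xA ?sBA // cardsU1 xNB cardB.
Qed.

Lemma leq_sub_cardsD (T : finType) (A B : {set T}) : #|A| - #|B| <= #|A :\: B|.
Proof. by rewrite cardsD leq_sub2l // subset_leq_card // subsetIr. Qed.

Section Neighbourhoods.

Variables (V : finType) (e : rel V).

Lemma mem_ext_nbhd_in (S W : {set V}) x y :
  x \in S -> e x y -> y \notin S -> y \in W -> y \in ext_nbhd_in e S W.
Proof.
move=> xS exy yNS yW; rewrite !inE yNS yW andbT /=.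
by apply/bigcupP; exists x; rewrite ?inE.
Qed.

Lemma ext_nbhd_inU (B U W : {set V}) :
  ext_nbhd_in e (B :|: U) (W :\: (B :|: U)) \subset
  ext_nbhd_in e B (W :\: B) :|: ext_nbhd_in e U (W :\: B).
Proof.
apply/subsetP => y; rewrite !inE negb_or => /and3P [/andP [/andP [yNB yNU]]].
move=> /bigcupP [x]; rewrite !inE => /orP [xB|xU] exy _ yW.
  rewrite yNB yW !andbT /=; apply/orP; left.
  by apply/bigcupP; exists x; rewrite ?inE.
rewrite yNB yNU yW !andbT /=; apply/orP; right.
by apply/bigcupP; exists x; rewrite ?inE.
Qed.

Variable m : nat.

Lemma linked_sym (X Y : {set V}) : symmetric e -> linked e m X Y -> linked e m Y X.
Proof.
move=> esym linkXY Y' X' sY'Y sX'X cardY' cardX'.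
have [x [y [xX' yY' exy]]] := linkXY X' Y' sX'X sY'Y cardX' cardY'.
by exists y, x; rewrite esym.
Qed.

Lemma linked_edge (X Y A B : {set V}) : linked e m X Y ->
  A \subset X -> B \subset Y -> m <= #|A| -> m <= #|B| ->
  exists x, exists y, [/\ x \in A, y \in B & e x y].
Proof.
move=> linkXY sAX sBY /exists_subset_card [A' sA'A cardA'].
move=> /exists_subset_card [B' sB'B cardB'].
have [x [y [xA' yB' exy]]] :=
  linkXY A' B' (subset_trans sA'A sAX) (subset_trans sB'B sBY) cardA' cardB'.
by exists x, y; rewrite (subsetP sA'A) ?(subsetP sB'B).
Qed.

Lemma card_outside_ext_nbhd_lt (X Y S Z W : {set V}) : linked e m X Y ->
  m <= #|S :&: X| -> Z \subset Y -> Z \subset W ->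
  #|Z :\: (S :|: ext_nbhd_in e S (W :\: S))| < m.
Proof.
move=> linkXY mSX sZY sZW; rewrite ltnNge; apply/negP => mZ.
have [x [y [/setIP [xS _] yZ' exy]]] :=
  linked_edge linkXY (subsetIr S X) (subset_trans (subsetDl _ _) sZY) mSX mZ.
move: yZ' => /setDP [yZ]; rewrite inE negb_or => /andP [yNS /negP]; apply.
by apply: (mem_ext_nbhd_in xS exy yNS); rewrite inE yNS (subsetP sZW).
Qed.

End Neighbourhoods.

Section Expansion.

Variables (V : finType) (e : rel V) (m d : nat) (X Y X0 Y0 : {set V}).
Hypotheses (esym : symmetric e) (XUY : X :|: Y = setT) (linkXY : linked e m X Y).
Hypotheses (sX0X : X0 \subset X) (sY0Y : Y0 \subset Y).
Hypotheses (bigX0 : (3 * d + 4) * m <= #|X0|) (bigY0 : (3 * d + 4) * m <= #|Y0|).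

Let W := X0 :|: Y0.

Lemma ext_nbhd_in_mid_large (S : {set V}) : 2 * m < #|S| -> #|S| <= 3 * m ->
  3 * d * m < #|ext_nbhd_in e S (W :\: S)|.
Proof.
set N := ext_nbhd_in e S (W :\: S) => bigS smallS.
rewrite ltnNge; apply/negP => smallN.
have outside (Z : {set V}) : (3 * d + 4) * m <= #|Z| -> m <= #|Z :\: (S :|: N)|.
  move=> bigZ; apply: leq_trans (leq_sub_cardsD Z (S :|: N)).
  by have [+ _] := leq_card_setU S N; lia.
have cardS : #|S| <= #|S :&: X| + #|S :&: Y|.
  by rewrite -{1}(setIT S) -XUY setIUr leq_card_setU.
have [mSX|mSY] : m <= #|S :&: X| \/ m <= #|S :&: Y| by lia.
  have := card_outside_ext_nbhd_lt linkXY mSX sY0Y (subsetUr X0 Y0).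
  by rewrite ltnNge outside.
have := card_outside_ext_nbhd_lt (linked_sym esym linkXY) mSY sX0X (subsetUl X0 Y0).
by rewrite ltnNge outside.
Qed.

End Expansion.

Theorem proposition3p36 (m d : nat) (V : finType) (e : rel V) (X Y : {set V}) :
  simple_graph e ->
  bipartite_with e X Y ->
  (forall X' Y' : {set V}, X' \subset X -> Y' \subset Y ->
      #|X'| = m -> #|Y'| = m -> exists x, exists y, [/\ x \in X', y \in Y' & e x y]) ->
  forall X0 Y0 : {set V}, X0 \subset X -> Y0 \subset Y ->
  (3 * d + 4) * m <= #|X0| -> (3 * d + 4) * m <= #|Y0| ->
  exists B : {set V}, #|B| <= 2 * m /\
    forall U : {set V}, U \subset ~: B -> #|U| <= m ->
      d * #|U| <= #|ext_nbhd_in e U ((X0 :|: Y0) :\: B)|.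
Proof.
move=> [_ esym] [_ XUY _] linkXY X0 Y0 sX0X sY0Y bigX0 bigY0.
set W := X0 :|: Y0.
pose sparse (B : {set V}) :=
  (#|B| <= 2 * m) && (#|ext_nbhd_in e B (W :\: B)| <= d * #|B|).
have sparse0 : sparse set0.
  by rewrite /sparse /ext_nbhd_in /ext_nbhd big_set0 set0D set0I !cards0.
have [B /andP [smallB sparseB] maxB] := arg_maxnP (fun B : {set V} => #|B|) sparse0.
exists B; split => // U sUB smallU; rewrite leqNgt; apply/negP => sparseU.
have cardBU : #|B :|: U| = #|B| + #|U|.
  by apply/eqP; rewrite (leq_card_setU B U) disjoint_sym disjoints_subset.
have sparseBU : #|ext_nbhd_in e (B :|: U) (W :\: (B :|: U))| <= d * #|B :|: U|.
  apply: leq_trans (subset_leq_card (ext_nbhd_inU e B U W)) _.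
  by apply: leq_trans (leq_card_setU _ _) _; rewrite cardBU; lia.
have [smallBU|bigBU] := leqP #|B :|: U| (2 * m).
  have : 0 < d * #|U| by apply: leq_ltn_trans sparseU.
  rewrite muln_gt0 => /andP [_ nonemptyU].
  by have := maxB (B :|: U); rewrite /sparse smallBU sparseBU cardBU => /(_ isT); lia.
have smallBU : #|B :|: U| <= 3 * m by rewrite cardBU; lia.
have := ext_nbhd_in_mid_large esym XUY linkXY sX0X sY0Y bigX0 bigY0 bigBU smallBU.
by rewrite ltnNge (leq_trans sparseBU) // (mulnC 3 d) -mulnA leq_mul2l smallBU orbT.
Qed.
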